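(* (i) For every $n\in\mathbb{N}$ and $a\in\mathbb{C}\setminus\mathbb{Z}^-$, \[ \sum_{j=0}^{n}\sum_{i=0}^{j}\frac{\binom{n+a+1}{i}}{\binom{n+a}{j}}(-1)^i=\frac{(-1)^n+1}{2}. \] (ii) For every $n\in\mathbb{N}$, \[ \sum_{j=0}^{n}\sum_{i=0}^{j}\frac{\binom{n+2}{i}}{\binom{n}{j}}(-1)^{n-i}=(n+1)\Big(H_{n+1}-H_{\lfloor\frac{n+1}{2}\rfloor}\Big). \]
   Context: For $x\in\mathbb{C}$, $i\in\mathbb{N}$: $\binom{x}{i}=x(x-1)\cdots(x-i+1)/i!$. $\mathbb{Z}^-=\{-1,-2,\dots\}$. $H_n=\sum_{k=1}^{n}\frac1k$ is the $n$-th harmonic number ($H_0=0$). *)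

From HB Require Import structures.
From mathcomp Require Import all_boot all_order all_algebra.
Set Implicit Arguments. Unset Strict Implicit. Unset Printing Implicit Defensive.
Import Order.TTheory GRing.Theory Num.Theory.
Local Open Scope ring_scope.

Definition binomR (R : fieldType) (x : R) (i : nat) : R :=
  (\prod_(k < i) (x - k%:R)) / (i`!)%:R.

Definition harmonic (n : nat) : rat := \sum_(k < n) ((k.+1)%:R)^-1.

(** Pascal's rule telescopes the alternating partial sums of binomial
    coefficients: for every [y] and [j],
    [\sum_(i <= j) (-1)^i binom(y + 1, i) = (-1)^j binom(y, j)].
    In (i) this cancels the denominator [binom(n + a, j)], which does not vanish
    because [n + a] is not one of [0, ..., n - 1], and leaves [\sum_(j <= n) (-1)^j].
    In (ii), with [y = n + 1], the quotient [binom(n + 1, j) / binom(n, j)] is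
    [(n + 1) / (n + 1 - j)], so the double sum is [n + 1] times the alternating
    harmonic sum [\sum_(k < n + 1) (-1)^k / (k + 1) = H_(n+1) - H_((n+1)/2)]. *)

From HB Require Import structures.
From mathcomp Require Import all_boot all_order all_algebra.
From mathcomp Require Import ring.
Set Implicit Arguments. Unset Strict Implicit.
Import Order.TTheory GRing.Theory Num.Theory.
Local Open Scope ring_scope.

Section GeneralizedBinomial.

Variable R : numFieldType.
Implicit Types (y : R) (i j m : nat).

Lemma natr_fact_neq0 j : (j`!)%:R != 0 :> R.
Proof. by rewrite pnatr_eq0 -lt0n fact_gt0. Qed.

Lemma binomR0 y : binomR y 0 = 1.
Proof. by rewrite /binomR big_ord0 divr1. Qed.

Lemma binomR_neq0 y j : (forall k, (k < j)%N -> y != k%:R) -> binomR y j != 0.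
Proof.
move=> y_notin; rewrite /binomR mulf_neq0 ?invr_neq0 ?natr_fact_neq0 //.
by apply/prodf_neq0 => k _; rewrite subr_eq0 y_notin.
Qed.

Lemma binomRS y j : binomR (y + 1) j.+1 = binomR y j.+1 + binomR y j.
Proof.
rewrite /binomR big_ord_recl big_ord_recr /=.
have -> : \prod_(k < j) (y + 1 - (bump 0 k)%:R) = \prod_(k < j) (y - k%:R).
  by apply: eq_bigr => k _; rewrite /bump add1n -natr1; ring.
rewrite factS natrM.
have jS_neq0 : (j.+1)%:R != 0 :> R by rewrite pnatr_eq0.
by field; rewrite ?nat1r jS_neq0 natr_fact_neq0.
Qed.

Lemma binomR_nat m i : binomR (m%:R : R) i = ('C(m, i))%:R.
Proof.
elim: m i => [|m IHm] [|i]; rewrite ?binomR0 ?bin0 //.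
  by rewrite bin0n /binomR big_ord_recl /= subrr !mul0r.
by rewrite -natr1 binomRS !IHm binS natrD.
Qed.

Lemma sum_alt_binomR y j :
  \sum_(i < j.+1) (-1) ^+ i * binomR (y + 1) i = (-1) ^+ j * binomR y j.
Proof.
elim: j => [|j IHj]; first by rewrite big_ord1 !binomR0.
by rewrite big_ord_recr /= IHj binomRS exprS; ring.
Qed.

Lemma sum_alt_binomR_div y j : binomR y j != 0 ->
  \sum_(i < j.+1) binomR (y + 1) i / binomR y j * (-1) ^+ i = (-1) ^+ j.
Proof.
move=> binom_neq0.
transitivity ((binomR y j)^-1 * \sum_(i < j.+1) (-1) ^+ i * binomR (y + 1) i).
  by rewrite mulr_sumr; apply: eq_bigr => i _; ring.
by rewrite sum_alt_binomR mulrCA mulVf ?mulr1.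
Qed.

Lemma sum_alt_bin m j :
  \sum_(i < j.+1) (-1) ^+ i * ('C(m.+1, i))%:R = (-1) ^+ j * ('C(m, j))%:R :> R.
Proof.
under eq_bigr do rewrite -binomR_nat -natr1.
by rewrite sum_alt_binomR binomR_nat.
Qed.

Lemma sum_signr n : \sum_(j < n.+1) (-1) ^+ j = ((-1) ^+ n + 1) / 2 :> R.
Proof.
have two_neq0 : 2 != 0 :> R by rewrite pnatr_eq0.
elim: n => [|n IHn]; first by rewrite big_ord1 expr0; field.
by rewrite big_ord_recr /= IHn exprS; field.
Qed.

Lemma binS_div_bin n j : (j <= n)%N ->
  ('C(n.+1, j))%:R / ('C(n, j))%:R = (n.+1)%:R / ((n.+1 - j)%N)%:R :> R.
Proof.
move=> le_jn.
have bin_neq0 : ('C(n, j))%:R != 0 :> R by rewrite pnatr_eq0 -lt0n bin_gt0.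
have sub_neq0 : ((n.+1 - j)%N)%:R != 0 :> R by rewrite pnatr_eq0 subn_eq0 -ltnNge ltnS.
have := congr1 (fun k => k%:R : R) (mul_bin_down n.+1 j); rewrite /= !natrM => bin_down.
by apply/eqP; rewrite eqr_div // mulrC -bin_down mulrC.
Qed.

End GeneralizedBinomial.

Lemma sum_alt_harmonic m :
  \sum_(k < m) (-1) ^+ k / (k.+1)%:R = harmonic m - harmonic m./2.
Proof.
elim: m => [|m IHm]; first by rewrite big_ord0 /harmonic big_ord0 subrr.
rewrite big_ord_recr /= IHm /harmonic big_ord_recr /= uphalf_half -signr_odd.
have := odd_double_half m; case: (odd m) => /= m_eq.
  rewrite add1n big_ord_recr /= expr1.
  have -> : (m.+1)%:R = 2 * (m./2.+1)%:R :> rat.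
    by rewrite -[in LHS]m_eq -doubleS -mul2n natrM.
  have half_neq0 : (m./2.+1)%:R != 0 :> rat by rewrite pnatr_eq0.
  by field; rewrite nat1r.
by rewrite add0n expr0; ring.
Qed.

Lemma sum_bin_div_signr n j : (j <= n)%N ->
  \sum_(i < j.+1) ('C(n.+2, i))%:R / ('C(n, j))%:R * (-1) ^+ (n - i)
  = (n.+1)%:R * ((-1) ^+ (n - j) / ((n.+1 - j)%N)%:R) :> rat.
Proof.
move=> le_jn.
have signr_sub i : (i <= n)%N -> (-1) ^+ (n - i) = (-1) ^+ n * (-1) ^+ i :> rat.
  by move=> le_in; rewrite exprB ?unitrN1 // invr_sign.
transitivity ((-1) ^+ n / ('C(n, j))%:R
              * \sum_(i < j.+1) (-1) ^+ i * ('C(n.+2, i))%:R : rat).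
  rewrite mulr_sumr; apply: eq_bigr => i _.
  by rewrite signr_sub; [ring | apply: leq_trans le_jn; rewrite -ltnS].
rewrite sum_alt_bin signr_sub // mulrCA -!mulrA mulrCA [_^-1 * _]mulrC.
by rewrite binS_div_bin //; ring.
Qed.

Theorem mainTheorem12 (C : numClosedFieldType) :
  (forall (n : nat) (a : C), (forall k : nat, a != - (k.+1)%:R) ->
     \sum_(j < n.+1) \sum_(i < j.+1)
        (binomR (n%:R + a + 1) i / binomR (n%:R + a) j) * (-1) ^+ i
     = ((-1) ^+ n + 1) / 2)
  /\
  (forall n : nat,
     \sum_(j < n.+1) \sum_(i < j.+1)
        (('C(n.+2, i))%:R / ('C(n, j))%:R) * (-1) ^+ (n - i)
     = (n.+1)%:R * (harmonic n.+1 - harmonic (n.+1)./2) :> rat).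
Proof.
split=> [n a a_notin|n].
  rewrite -sum_signr; apply: eq_bigr => j _; rewrite sum_alt_binomR_div //.
  apply: binomR_neq0 => k lt_kj; apply: contra (a_notin (n - k.+1)%N) => /eqP nak.
  have lt_kn : (k < n)%N by apply: leq_trans lt_kj _; rewrite -ltnS.
  by rewrite subnSK // natrB ?(ltnW lt_kn) // opprB -nak addrC addKr.
rewrite -sum_alt_harmonic [in RHS](reindex_inj rev_ord_inj) mulr_sumr.
apply: eq_bigr => j _; have le_jn : (j <= n)%N by rewrite -ltnS.
by rewrite sum_bin_div_signr //= subSS -subSn.
Qed.
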